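(* Let $\mathbb P_{\mathcal A}$ be any probability measure on $\mathcal A$, let $\xi=\lambda^{-1}$, and let $f\colon\Delta\to\Delta$ be the Bernoulli Young tower defined by $(\mathcal A,\mathbb P_{\mathcal A})$, $h_{\mathcal A}$ and $\xi$. Let $\pi\colon\Delta\to\Lambda$ be as defined in the context. Then for all $a,b\in\Delta$, $$d_\Lambda(\pi(a),\pi(b))\le C_\Lambda\, d(a,b),\qquad C_\Lambda=\lambda C_\ell\operatorname{diam}\Lambda.$$
   Context: Nonuniformly expanding map: $(\Lambda,d_\Lambda)$ is a bounded complete metric space and $T\colon\Lambda\to\Lambda$ is Borel measurable. $Y\subset\Lambda$ is closed, $m$ is a Borel probability measure on $Y$, and $\alpha$ is an at most countable partition of $Y$ (modulo an $m$-null set) with $m(a)>0$ and $m(\bar a\setminus a)=0$ for all $a\in\alpha$. $\tau\colon Y\to\mathbb{N}$ is integrable, constant on each $a\in\alpha$ with value $\tau(a)$, and $T^{\tau(y)}(y)\in Y$ for all $y\in Y$. There are constants $0<\eta\le 1$, $\lambda>1$, $C_\ell,K\ge1$ and for each $a\in\alpha$ a map $T_a\colon\Lambda\to\Lambda$ with $T_a^\ell=T^\ell$ $m$-a.s. on $\bar a$ for $0\le\ell<\tau(a)$, such that $T_{Y,a}:=T_a^{\tau(a)}$ is a bijection $\bar a\to Y$ and for all $x,y\in\bar a$: (i) $d_\Lambda(T_{Y,a}x,T_{Y,a}y)\ge\lambda d_\Lambda(x,y)$; (ii) $d_\Lambda(T_a^\ell x,T_a^\ell y)\le C_\ell\, d_\Lambda(T_{Y,a}x,T_{Y,a}y)$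 for $0\le \ell<\tau(a)$; (iii) $T_{Y,a}\colon\bar a\to Y$ is nonsingular and its inverse Jacobian $\zeta=\frac{dm}{dm\circ T_{Y,a}}$ satisfies $|\log\zeta(x)-\log\zeta(y)|\le K d_\Lambda(T_{Y,a}x,T_{Y,a}y)^\eta$. Words: $\mathcal A$ is the set of all nonempty finite words $w=a_0\cdots a_{n-1}$ over $\alpha$; $h_{\mathcal A}(w)=\tau(a_0)+\dots+\tau(a_{n-1})$, $T_{Y,w}=T_{Y,a_{n-1}}\circ\cdots\circ T_{Y,a_0}$, $Y_w=(T_{Y,a_{n-1}}\circ\cdots\circ T_{Y,a_0})^{-1}(Y)$. For a word $w=a_0\cdots a_{n-1}$ and $0\le\ell<h_{\mathcal A}(w)$, writing $\ell=\tau(a_0)+\dots+\tau(a_{j-1})+r$ with $0\le r<\tau(a_j)$, set $T_w^\ell=T_{a_j}^r\circ T_{Y,a_{j-1}}\circ\cdots\circ T_{Y,a_0}$ on $Y_w$. Concatenation of words is denoted $w_0w_1\cdots w_n$. Bernoulli Young tower: given an at most countable probability space $(\mathcal{A},\mathbb{P}_{\mathcal A})$, an integrable $h_{\mathcal A}\colon\mathcal A\to\mathbb N$ and $0<\xi<1$, let $(X,\mathbb P_X)=(\mathcal A^{\mathbb N},\mathbb P_{\mathcal A}^{\mathbb N})$ with left shift $f_X$, $h(a_0,a_1,\dots)=h_{\mathcal A}(a_0)$, $\Delta=\{(x,\ell)\in X\times\mathbb Z:0\le\ell<h(x)\}$, $f(x,\ell)=(x,\ell+1)$ if $\ell<h(x)-1$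 and $f(x,\ell)=(f_Xx,0)$ if $\ell=h(x)-1$. On $X$, $d(x,y)=\xi^{s(x,y)}$ with $s((a_j),(b_j))=\inf\{j\ge0:a_j\ne b_j\}$; on $\Delta$, $d((x,k),(y,j))=1$ if $k\ne j$ and $=d(x,y)$ if $k=j$. $\mathbb P$ is the $f$-invariant probability on $\Delta$ with $\mathbb P(A\times\{\ell\})=\bar h^{-1}\mathbb P_X(A)$ for $A\subset\{h\ge\ell+1\}$, $\bar h=\int h\,d\mathbb P_X$. The base $\Delta_0=\{(x,0)\}$ is identified with $X$. The map $\pi$: for $x=(w_0,w_1,\dots)\in X$, $\pi_X(x)$ is the unique point of $\bigcap_{n\ge0}Y_{w_0\cdots w_n}$ (nested closed sets with diameters $\to0$), and $\pi((w_0,w_1,\dots),\ell)=T_{w_0}^\ell(\pi_X(w_0,w_1,\dots))$. *)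

From Stdlib Require Import Reals List Arith ClassicalEpsilon.
Import ListNotations.
Open Scope R_scope.

Definition is_metric {Lam : Type} (dL : Lam -> Lam -> R) : Prop :=
  (forall x y, 0 <= dL x y) /\ (forall x y, dL x y = 0 <-> x = y) /\
  (forall x y, dL x y = dL y x) /\ (forall x y z, dL x z <= dL x y + dL y z).

Definition bounded_metric {Lam : Type} (dL : Lam -> Lam -> R) : Prop :=
  exists M, forall x y, dL x y <= M.

Definition cauchy_seq {Lam : Type} (dL : Lam -> Lam -> R) (u : nat -> Lam) : Prop :=
  forall eps, 0 < eps -> exists N, forall n m, (N <= n)%nat -> (N <= m)%nat -> dL (u n) (u m) < eps.

Definition converges_to {Lam : Type} (dL : Lam -> Lam -> R) (u : nat -> Lam) (l : Lam) : Prop :=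
  forall eps, 0 < eps -> exists N, forall n, (N <= n)%nat -> dL (u n) l < eps.

Definition complete_metric {Lam : Type} (dL : Lam -> Lam -> R) : Prop :=
  forall u, cauchy_seq dL u -> exists l, converges_to dL u l.

Definition closure {Lam : Type} (dL : Lam -> Lam -> R) (A : Lam -> Prop) (x : Lam) : Prop :=
  forall eps, 0 < eps -> exists y, A y /\ dL x y < eps.

Definition is_closed {Lam : Type} (dL : Lam -> Lam -> R) (A : Lam -> Prop) : Prop :=
  forall x, closure dL A x -> A x.

Definition is_diam {Lam : Type} (dL : Lam -> Lam -> R) (D : R) : Prop :=
  is_lub (fun r => exists x y, r = dL x y) D.

Definition countable_type (I : Type) : Prop :=
  exists f : I -> nat, forall i j, f i = f j -> i = j.

Definition TYa {Lam I : Type} (tau : I -> nat) (Ta : I -> Lam -> Lam) (a : I) (x : Lam) : Lam :=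
  Nat.iter (tau a) (Ta a) x.

Fixpoint hA {I : Type} (tau : I -> nat) (w : list I) : nat :=
  match w with [] => 0%nat | a :: w' => (tau a + hA tau w')%nat end.

Fixpoint inYw {Lam I : Type} (dL : Lam -> Lam -> R) (Y : Lam -> Prop) (atom : I -> Lam -> Prop)
    (tau : I -> nat) (Ta : I -> Lam -> Lam) (w : list I) (x : Lam) : Prop :=
  match w with
  | [] => Y x
  | a :: w' => closure dL (atom a) x /\ inYw dL Y atom tau Ta w' (TYa tau Ta a x)
  end.

Fixpoint Tw {Lam I : Type} (tau : I -> nat) (Ta : I -> Lam -> Lam) (w : list I) (l : nat) (x : Lam) : Lam :=
  match w with
  | [] => x
  | a :: w' => if Nat.ltb l (tau a) then Nat.iter l (Ta a) x
               else Tw tau Ta w' (l - tau a) (TYa tau Ta a x)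
  end.

(* points of X = A^N : sequences of nonempty words *)
Definition inX {I : Type} (x : nat -> list I) : Prop := forall n, x n <> [].

Fixpoint prefixW {I : Type} (x : nat -> list I) (n : nat) : list I :=
  match n with 0%nat => x 0%nat | S k => prefixW x k ++ x (S k) end.

Definition sepAt {I : Type} (x y : nat -> list I) (n : nat) : Prop :=
  (forall j, (j < n)%nat -> x j = y j) /\ x n <> y n.

(* d(x,y) = xi^{s(x,y)}, with xi^infinity = 0 *)
Definition dX {I : Type} (xi : R) (x y : nat -> list I) : R :=
  match excluded_middle_informative (exists n, sepAt x y n) with
  | left H => xi ^ (proj1_sig (constructive_indefinite_description _ H))
  | right _ => 0
  end.

Definition inDelta {I : Type} (tau : I -> nat) (p : (nat -> list I) * nat) : Prop :=
  inX (fst p) /\ (snd p < hA tau (fst p 0%nat))%nat.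

Definition dDelta {I : Type} (xi : R) (p q : (nat -> list I) * nat) : R :=
  if Nat.eq_dec (snd p) (snd q) then dX xi (fst p) (fst q) else 1.

Definition piDelta {Lam I : Type} (tau : I -> nat) (Ta : I -> Lam -> Lam)
    (piX : (nat -> list I) -> Lam) (p : (nat -> list I) * nat) : Lam :=
  Tw tau Ta (fst p 0%nat) (snd p) (piX (fst p)).

From Stdlib Require Import Reals List Lra Lia Classical ClassicalEpsilon FunctionalExtensionality.
Import ListNotations.
Open Scope R_scope.

(* If a and b lie on the same floor ℓ and their codes agree on the words w_0, ..., w_n,
   then π_X(a), π_X(b) lie in Y_{w_0⋯w_n}.  Every letter of w_1⋯w_n (at least n of them)
   expands distances by λ, and the images at the end are at most diam Λ apart; the floor
   map T_{w_0}^ℓ costs a factor C_ℓ against the first return inside w_0.  This gives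
   C_ℓ diam Λ λ^{-n} = C_Λ λ^{-(n+1)}.  In every other case d(a,b) = 1 and the bound is
   d_Λ ≤ diam Λ. *)

Lemma is_diam_ub (Lam : Type) (dL : Lam -> Lam -> R) (D : R) :
  is_diam dL D -> forall x y, dL x y <= D.
Proof. intros [Hub _] x y; apply Hub; exists x, y; reflexivity. Qed.

Lemma prefixW_split (I : Type) (x : nat -> list I) :
  inX x -> forall n, exists W, prefixW x n = x 0%nat ++ W /\ (n <= length W)%nat.
Proof.
  intros Hx; induction n as [|n [W [HW Hlen]]]; simpl.
  - exists []; rewrite app_nil_r; split; auto.
  - exists (W ++ x (S n)); rewrite HW, app_assoc; split; [reflexivity|].
    rewrite length_app; destruct (x (S n)) eqn:E; [contradiction (Hx (S n))|simpl; lia].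
Qed.

Lemma prefixW_ext (I : Type) (x y : nat -> list I) n :
  (forall j, (j <= n)%nat -> x j = y j) -> prefixW x n = prefixW y n.
Proof.
  induction n as [|n IH]; intros Hxy; simpl; [apply Hxy; lia|].
  rewrite IH, (Hxy (S n)); [reflexivity|lia|intros; apply Hxy; lia].
Qed.

Section InducedDistances.

Variables (Lam I : Type) (dL : Lam -> Lam -> R) (Y : Lam -> Prop) (atom : I -> Lam -> Prop)
  (tau : I -> nat) (Ta : I -> Lam -> Lam) (lam Cl D : R).

Hypothesis dL_ge0 : forall x y, 0 <= dL x y.
Hypothesis dL_le_D : forall x y, dL x y <= D.
Hypothesis lam_gt1 : 1 < lam.
Hypothesis Cl_ge1 : 1 <= Cl.
Hypothesis TYa_expanding : forall a x y, closure dL (atom a) x -> closure dL (atom a) y ->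
  dL (TYa tau Ta a x) (TYa tau Ta a y) >= lam * dL x y.
Hypothesis Ta_iter_bounded : forall a x y l,
  closure dL (atom a) x -> closure dL (atom a) y -> (l < tau a)%nat ->
  dL (Nat.iter l (Ta a) x) (Nat.iter l (Ta a) y) <= Cl * dL (TYa tau Ta a x) (TYa tau Ta a y).

Notation inYw := (inYw dL Y atom tau Ta).

Lemma inYw_dist_mul_pow_le W p q :
  inYw W p -> inYw W q -> dL p q * lam ^ length W <= D.
Proof.
  revert p q; induction W as [|a W IH]; intros p q Hp Hq; simpl.
  - rewrite Rmult_1_r; apply dL_le_D.
  - destruct Hp as [Hp HpW], Hq as [Hq HqW].
    specialize (IH _ _ HpW HqW).
    pose proof (TYa_expanding a p q Hp Hq) as Hexp.
    assert (0 < lam ^ length W) by (apply pow_lt; lra).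
    assert (dL p q * lam * lam ^ length W
            <= dL (TYa tau Ta a p) (TYa tau Ta a q) * lam ^ length W)
      by (apply Rmult_le_compat_r; lra).
    lra.
Qed.

Lemma inYw_app_dist_mul_pow_le w W p q :
  inYw (w ++ W) p -> inYw (w ++ W) q -> dL p q * lam ^ length W <= D.
Proof.
  intros Hp Hq.
  apply Rle_trans with (dL p q * lam ^ length (w ++ W)).
  - apply Rmult_le_compat_l; [apply dL_ge0|].
    apply Rle_pow; [lra|rewrite length_app; lia].
  - exact (inYw_dist_mul_pow_le _ _ _ Hp Hq).
Qed.

Lemma Tw_dist_mul_pow_le w W l p q :
  inYw (w ++ W) p -> inYw (w ++ W) q -> (l < hA tau w)%nat ->
  dL (Tw tau Ta w l p) (Tw tau Ta w l q) * lam ^ length W <= Cl * D.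
Proof.
  revert l p q; induction w as [|a w IH]; intros l p q Hp Hq Hl; simpl in *; [lia|].
  destruct Hp as [Hpa HpW], Hq as [Hqa HqW].
  destruct (Nat.ltb l (tau a)) eqn:Hlt; [|apply IH; auto; apply Nat.ltb_ge in Hlt; lia].
  apply Nat.ltb_lt in Hlt.
  set (u := dL (TYa tau Ta a p) (TYa tau Ta a q)).
  assert (Hu : u * lam ^ length W <= D) by exact (inYw_app_dist_mul_pow_le _ _ _ _ HpW HqW).
  assert (0 < lam ^ length W) by (apply pow_lt; lra).
  apply Rle_trans with (Cl * u * lam ^ length W).
  - apply Rmult_le_compat_r; [lra|exact (Ta_iter_bounded a p q l Hpa Hqa Hlt)].
  - rewrite Rmult_assoc; apply Rmult_le_compat_l; lra.
Qed.

Lemma Tw_dist_sepAt (piX : (nat -> list I) -> Lam)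
  (HpiX : forall x, inX x -> forall n, inYw (prefixW x n) (piX x)) x y n k :
  inX x -> inX y -> sepAt x y (S n) -> (k < hA tau (x 0%nat))%nat ->
  dL (Tw tau Ta (x 0%nat) k (piX x)) (Tw tau Ta (y 0%nat) k (piX y)) * lam ^ n <= Cl * D.
Proof.
  intros Hx Hy [Hagree _] Hk.
  rewrite <- (Hagree 0%nat) by lia.
  destruct (prefixW_split I x Hx n) as [W [HW Hlen]].
  pose proof (HpiX x Hx n) as Hpx; pose proof (HpiX y Hy n) as Hpy.
  rewrite (prefixW_ext I y x n) in Hpy by (intros; symmetry; apply Hagree; lia).
  rewrite HW in Hpx, Hpy.
  apply Rle_trans with
    (dL (Tw tau Ta (x 0%nat) k (piX x)) (Tw tau Ta (x 0%nat) k (piX y)) * lam ^ length W).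
  - apply Rmult_le_compat_l; [apply dL_ge0|apply Rle_pow; lra || lia].
  - exact (Tw_dist_mul_pow_le _ _ _ _ _ Hpx Hpy Hk).
Qed.

End InducedDistances.

Lemma eq_of_no_sepAt (I : Type) (x y : nat -> list I) :
  ~ (exists n, sepAt x y n) -> x = y.
Proof.
  intros Hno.
  assert (Hagree : forall n j, (j < n)%nat -> x j = y j).
  { induction n as [|n IH]; intros j Hj; [lia|].
    assert (x n = y n) by (apply NNPP; intros Hne; apply Hno; exists n; split; assumption).
    destruct (Nat.eq_dec j n) as [->|]; [assumption|apply IH; lia]. }
  apply functional_extensionality; intros m; apply (Hagree (S m)); lia.
Qed.

Lemma dX_cases (I : Type) (xi : R) (x y : nat -> list I) :
  (x = y /\ dX xi x y = 0) \/ (exists n, sepAt x y n /\ dX xi x y = xi ^ n).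
Proof.
  unfold dX; destruct (excluded_middle_informative _) as [Hsep|Hno].
  - right; destruct (constructive_indefinite_description _ Hsep) as [n Hn]; eauto.
  - left; split; [apply eq_of_no_sepAt|]; auto.
Qed.

Theorem proposition4p3
  (Lam : Type) (dL : Lam -> Lam -> R)
  (Hmetric : is_metric dL) (Hbdd : bounded_metric dL) (Hcomplete : complete_metric dL)
  (T : Lam -> Lam)
  (Y : Lam -> Prop) (HYclosed : is_closed dL Y)
  (I : Type) (HIcount : countable_type I) (atom : I -> Lam -> Prop)
  (HatomY : forall a x, atom a x -> Y x)
  (Hdisj : forall a b x, atom a x -> atom b x -> a = b)
  (tau : I -> nat) (Htau1 : forall a, (1 <= tau a)%nat)
  (HTret : forall a y, atom a y -> Y (Nat.iter (tau a) T y))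
  (lam Cl : R) (Hlam : 1 < lam) (HCl : 1 <= Cl)
  (Ta : I -> Lam -> Lam)
  (Hbij_into : forall a x, closure dL (atom a) x -> Y (TYa tau Ta a x))
  (Hbij_inj : forall a x y, closure dL (atom a) x -> closure dL (atom a) y ->
                TYa tau Ta a x = TYa tau Ta a y -> x = y)
  (Hbij_onto : forall a z, Y z -> exists x, closure dL (atom a) x /\ TYa tau Ta a x = z)
  (Hexp : forall a x y, closure dL (atom a) x -> closure dL (atom a) y ->
            dL (TYa tau Ta a x) (TYa tau Ta a y) >= lam * dL x y)
  (Hbnd : forall a x y l, closure dL (atom a) x -> closure dL (atom a) y -> (l < tau a)%nat ->
            dL (Nat.iter l (Ta a) x) (Nat.iter l (Ta a) y) <= Cl * dL (TYa tau Ta a x) (TYa tau Ta a y))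
  (piX : (nat -> list I) -> Lam)
  (HpiX : forall x, inX x -> forall n, inYw dL Y atom tau Ta (prefixW x n) (piX x))
  (D : R) (HD : is_diam dL D) :
  forall a b : (nat -> list I) * nat, inDelta tau a -> inDelta tau b ->
    dL (piDelta tau Ta piX a) (piDelta tau Ta piX b) <= (lam * Cl * D) * dDelta (/ lam) a b.
Proof.
  destruct Hmetric as [Hnn [Hzero _]].
  pose proof (is_diam_ub _ _ _ HD) as HDub.
  intros [x k] [y j] [Hx Hk] [Hy _]; unfold dDelta, piDelta; simpl in *.
  assert (HD_le : D <= lam * Cl * D).
  { assert (0 <= D) by (apply Rle_trans with (dL (piX x) (piX x)); auto).
    assert (1 <= lam * Cl) by nra. nra. }
  destruct (Nat.eq_dec k j) as [<-|_]; [|rewrite Rmult_1_r; eapply Rle_trans; eauto].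
  destruct (dX_cases I (/ lam) x y) as [[<- ->] | [[|n] [Hsep ->]]].
  - rewrite (proj2 (Hzero _ _) eq_refl); lra.
  - rewrite Rmult_1_r; eapply Rle_trans; eauto.
  - pose proof (Tw_dist_sepAt Lam I dL Y atom tau Ta lam Cl D Hnn HDub Hlam HCl Hexp Hbnd
                  piX HpiX x y n k Hx Hy Hsep Hk) as Hsep_bound.
    assert (0 < lam ^ n) by (apply pow_lt; lra).
    apply (Rmult_le_reg_r (lam ^ n)); [assumption|].
    replace (lam * Cl * D * (/ lam) ^ S n * lam ^ n) with (Cl * D)
      by (rewrite pow_inv; simpl; field; split; lra).
    exact Hsep_bound.
Qed.
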